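(* Let $(G,\vec E,0,\tau)$ be a game-graph with associated Boolean function $L$. Let $${\cal Z}_{\rm strat}:=\{Z(\sigma_1):\sigma_1\in{\cal S}_1\},\qquad {\cal A}_{\rm strat}:=\{A(\sigma_2):\sigma_2\in{\cal S}_2\}.$$ Then $${\cal Z}(L)\subset{\cal Z}_{\rm strat}\subset{\cal Z}^\uparrow(L)\qquad\text{and}\qquad{\cal A}(L)\subset{\cal A}_{\rm strat}\subset{\cal A}^\uparrow(L).$$
   Context: **Game-graph.** A game-graph is a quadruple $(G,\vec E,0,\tau)$ where: - $(G,\vec E)$ is a finite acyclic directed graph; - $0\in G$ is such that every $v\in G$ is reachable from $0$ by a directed path; - $\tau:\mathring G\to\{1,2\}$. Here ${\cal O}(v):=\{w:(v,w)\in\vec E\}$, $\partial G:=\{v:{\cal O}(v)=\emptyset\}$ (possible outcomes), $\mathring G:=G\setminus\partial G$, and $\mathring G^i:=\{v\in\mathring G:\tau(v)=i\}$ (Alice moves at $\tau=1$, Bob at $\tau=2$). **Strategies.** A strategy for Alice is a map $\sigma_1$ on $\mathring G^1$ with $\sigma_1(v)\in{\cal O}(v)$; strategies $\sigma_2$ for Bob are defined similarly on $\mathring G^2$. ${\cal S}_1$ and ${\cal S}_2$ denote the sets of strategies. Given $\sigma_1,\sigma_2$, there is a unique path $0=v_0,\dots,v_n$ with $v_n\in\partial G$ and $v_{k+1}=\sigma_{\tau(v_k)}(v_k)$; set $o(\sigma_1,\sigma_2):=v_n$. Define $$Z(\sigma_1):=\{o(\sigma_1,\sigma'):\sigma'\in{\cal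 S}_2\},\qquad A(\sigma_2):=\{o(\sigma',\sigma_2):\sigma'\in{\cal S}_1\}.$$ **Boolean function.** For $x:\partial G\to\{0,1\}$ extend to $\bar x$ on $G$ by $\bar x=x$ on $\partial G$, $\bar x(v)=\min_{w\in{\cal O}(v)}\bar x(w)$ for $v\in\mathring G^1$, and $\bar x(v)=\max_{w\in{\cal O}(v)}\bar x(w)$ for $v\in\mathring G^2$. Set $L(x):=\bar x(0)$, a monotone Boolean function on $\{0,1\}^{\partial G}$. **One-sets and zero-sets.** A one-set of $L$ is $A\subset\partial G$ with $L(1_A)=1$; a zero-set is $Z\subset\partial G$ with $L(1-1_Z)=0$; minimal means containing no other such set as a proper subset. ${\cal A}^\uparrow(L)$ and ${\cal Z}^\uparrow(L)$ denote the sets of one-sets and zero-sets, and ${\cal A}(L)$ and ${\cal Z}(L)$ the minimal ones. *)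

From mathcomp Require Import all_boot.
Set Implicit Arguments. Unset Strict Implicit. Unset Printing Implicit Defensive.

Section GameGraph.
Variables (V : finType) (e : rel V) (root : V) (alice : V -> bool).
(* Game-graph (G, E, 0, tau): vertices V, edges e, root 0 = root,
   tau v = 1 (Alice) iff alice v = true, tau v = 2 (Bob) iff alice v = false;
   alice is only relevant on interior vertices. *)

Definition out (v : V) : {set V} := [set w | e v w].
Definition leaf (v : V) : bool := out v == set0.
Definition boundary : {set V} := [set v | leaf v].

Definition acyclic : Prop := forall v w, e v w -> ~~ connect e w v.
Definition rooted : Prop := forall v, connect e root v.

(* Strategies: maps choosing an out-neighbour at each interior vertex of the
   player; values elsewhere are irrelevant. *)
Definition strat1 (s : {ffun V -> V}) : bool :=
  [forall v, (~~ leaf v && alice v) ==> e v (s v)].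
Definition strat2 (s : {ffun V -> V}) : bool :=
  [forall v, (~~ leaf v && ~~ alice v) ==> e v (s v)].

Definition step (s1 s2 : {ffun V -> V}) (v : V) : V :=
  if leaf v then v else if alice v then s1 v else s2 v.

(* o(s1,s2): end of the play; in an acyclic graph the play reaches a leaf in
   fewer than #|V| steps, and leaves are fixed points of step. *)
Definition outcome (s1 s2 : {ffun V -> V}) : V := iter #|V| (step s1 s2) root.

Definition Zof (s1 : {ffun V -> V}) : {set V} :=
  [set v | [exists s2, strat2 s2 && (outcome s1 s2 == v)]].
Definition Aof (s2 : {ffun V -> V}) : {set V} :=
  [set v | [exists s1, strat1 s1 && (outcome s1 s2 == v)]].

Fixpoint xbar (k : nat) (x : V -> bool) (v : V) : bool :=
  match k with
  | 0 => x v
  | k'.+1 => if leaf v then x v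
             else if alice v then [forall w, e v w ==> xbar k' x w]
             else [exists w, e v w && xbar k' x w]
  end.
Definition L (x : V -> bool) : bool := xbar #|V| x root.

Definition one_set (A : {set V}) : bool :=
  (A \subset boundary) && L (fun v => v \in A).
Definition zero_set (Z : {set V}) : bool :=
  (Z \subset boundary) && ~~ L (fun v => v \notin Z).
Definition min_one_set (A : {set V}) : Prop :=
  one_set A /\ forall B : {set V}, B \proper A -> ~~ one_set B.
Definition min_zero_set (Z : {set V}) : Prop :=
  zero_set Z /\ forall B : {set V}, B \proper Z -> ~~ zero_set B.

End GameGraph.

(* Acyclicity bounds every path by #|V| edges, so at depth #|V| the min/max
   recursion defining L has stabilised and the value of a vertex satisfies its
   recursion.  A player who always moves to a child carrying the value he wants
   (Bob: value 1, Alice: value 0) keeps that value along the play, so the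
   outcome has it.  Hence if L(1 - 1_{Z(s1)}) were 1, Bob would reach an
   outcome outside Z(s1); and for a minimal zero-set Z, the strategy of Alice
   keeping the value of 1 - 1_Z at 0 has Z(s1) included in Z, and Z(s1) is a
   zero-set, so Z(s1) = Z.  The one-set statements are the zero-set statements
   for the game in which the two players exchange their roles. *)
From mathcomp Require Import all_boot.
Set Implicit Arguments. Unset Strict Implicit. Unset Printing Implicit Defensive.

Section Game.
Variables (V : finType) (e : rel V) (root : V) (alice : V -> bool).
Hypothesis acyc : acyclic e.

Lemma path_uniq_acyclic x p : path e x p -> uniq (x :: p).
Proof.
elim: p x => [|y p IHp] x //; rewrite [path _ _ _]/= => /andP[exy pth_y].
rewrite cons_uniq IHp // andbT.
by apply/negP => /(path_connect pth_y); apply/negP; apply: acyc.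
Qed.

Lemma path_size_acyclic x p : path e x p -> size p < #|V|.
Proof.
move=> /path_uniq_acyclic/card_uniqP /= <-.
exact: max_card.
Qed.

Lemma xbar_leaf k x v : leaf e v -> xbar e alice k x v = x v.
Proof. by case: k => //= k ->. Qed.

Lemma xbar_stable x n k v : (forall p, path e v p -> size p < n) -> n <= k ->
  xbar e alice k x v = xbar e alice n x v.
Proof.
elim: n k v => [|n IHn] k v short; first by have := short [::] isT.
case: k => // k le_nk /=; case: (leaf e v) => //.
have IHw w : e v w -> xbar e alice k x w = xbar e alice n x w.
  by move=> evw; apply: IHn => // p pth; apply: (short (w :: p)); rewrite /= evw.
case: (alice v).
  by apply: eq_forallb => w; case evw: (e v w); rewrite //= IHw.
by apply: eq_existsb => w; case evw: (e v w); rewrite //= IHw.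
Qed.

Definition value x v := xbar e alice #|V| x v.

Lemma value_leaf x v : leaf e v -> value x v = x v.
Proof. exact: xbar_leaf. Qed.

Lemma value_rec x v : ~~ leaf e v -> value x v =
  if alice v then [forall w, e v w ==> value x w] else [exists w, e v w && value x w].
Proof.
move=> /negbTE nonleaf.
have short p : path e v p -> size p < #|V| by exact: path_size_acyclic.
by rewrite /value -(xbar_stable x short (leqnSn _)) /= nonleaf.
Qed.

Definition reply (P : pred V) : {ffun V -> V} :=
  [ffun v => if [pick w | e v w && P w] is Some w then w
             else odflt v [pick w | e v w]].

Lemma reply_edge P v : ~~ leaf e v -> e v (reply P v).
Proof.
rewrite ffunE; case: pickP => [w /andP[]//|_]; case: pickP => [//|no_edge].
by case/set0Pn=> w; rewrite inE no_edge.
Qed.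

Lemma reply_pred (P : pred V) v w : e v w -> P w -> P (reply P v).
Proof.
move=> evw Pw; rewrite ffunE; case: pickP => [w' /andP[]//|no_reply].
by have := no_reply w; rewrite evw Pw.
Qed.

Lemma strat1_reply P : strat1 e alice (reply P).
Proof. by apply/forallP => v; apply/implyP => /andP[nonleaf _]; apply: reply_edge. Qed.

Lemma strat2_reply P : strat2 e alice (reply P).
Proof. by apply/forallP => v; apply/implyP => /andP[nonleaf _]; apply: reply_edge. Qed.

Lemma strat1_edge s1 v : strat1 e alice s1 -> ~~ leaf e v -> alice v -> e v (s1 v).
Proof. by move=> /forallP/(_ v) S1 nonleaf av; rewrite nonleaf av in S1. Qed.

Lemma strat2_edge s2 v : strat2 e alice s2 -> ~~ leaf e v -> ~~ alice v -> e v (s2 v).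
Proof. by move=> /forallP/(_ v) S2 nonleaf av; rewrite nonleaf av in S2. Qed.

Lemma step_edge s1 s2 v : strat1 e alice s1 -> strat2 e alice s2 -> ~~ leaf e v ->
  e v (step e alice s1 s2 v).
Proof.
move=> S1 S2 nonleaf; rewrite /step (negbTE nonleaf).
by case: ifPn => av; [apply: strat1_edge | apply: strat2_edge].
Qed.

Lemma outcome_leaf s1 s2 : strat1 e alice s1 -> strat2 e alice s2 ->
  leaf e (outcome e root alice s1 s2).
Proof.
move=> S1 S2; apply/negPn/negP => nonleaf_end.
pose f := step e alice s1 s2.
have nonleaf_play i : i <= #|V| -> ~~ leaf e (iter i f root).
  move=> le_iV; apply: contra nonleaf_end => leaf_i.
  have fixed n : iter n f (iter i f root) = iter i f root.
    by elim: n => //= n ->; rewrite /f /step leaf_i.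
  by rewrite /outcome -(subnK le_iV) iterD fixed.
have play : path e root (traject f (f root) #|V|).
  apply: (@sub_in_path _ [pred u | ~~ leaf e u] (frel f)).
  - by move=> u w nonleaf_u _ /eqP <-; apply: step_edge.
  - rewrite -trajectS; apply/allP => u /trajectP[i lt_i ->].
    exact: nonleaf_play.
  - exact: fpath_traject.
by have := path_size_acyclic play; rewrite size_traject ltnn.
Qed.

Lemma outcome_ind (P : pred V) s1 s2 :
  (forall v, ~~ leaf e v -> P v -> P (step e alice s1 s2 v)) ->
  P root -> P (outcome e root alice s1 s2).
Proof.
move=> stepP Proot; rewrite /outcome; elim: #|V| => //= n IHn.
set v := iter n _ root in IHn *.
have [leaf_v | nonleaf_v] := boolP (leaf e v); last exact: stepP.
by rewrite /step leaf_v.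
Qed.

Lemma bob_forces_one x s1 : strat1 e alice s1 -> value x root ->
  x (outcome e root alice s1 (reply (value x))).
Proof.
move=> S1 val_root.
rewrite -value_leaf; last exact/outcome_leaf/strat2_reply.
apply: outcome_ind val_root => v nonleaf; rewrite value_rec // /step (negbTE nonleaf).
case: ifPn => av.
  by move/forallP/(_ (s1 v)); rewrite strat1_edge.
by case/existsP=> w /andP[evw val_w]; apply: reply_pred val_w.
Qed.

Lemma alice_forces_zero x s2 : strat2 e alice s2 -> ~~ value x root ->
  ~~ x (outcome e root alice (reply (fun v => ~~ value x v)) s2).
Proof.
move=> S2 val_root.
rewrite -value_leaf; last exact/outcome_leaf/S2/strat1_reply.
apply: (@outcome_ind (fun v => ~~ value x v)) val_root => v nonleaf.
rewrite value_rec // /step (negbTE nonleaf).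
case: ifPn => av.
  rewrite negb_forall => /existsP[w]; rewrite negb_imply => /andP[].
  exact: (@reply_pred (fun u => ~~ value x u)).
by rewrite negb_exists => /forallP/(_ (s2 v)); rewrite strat2_edge.
Qed.

Lemma Zof_zero_set s1 :
  strat1 e alice s1 -> zero_set e root alice (Zof e root alice s1).
Proof.
move=> S1; apply/andP; split.
  apply/subsetP => v; rewrite !inE => /existsP[s2 /andP[S2 /eqP <-]].
  exact: outcome_leaf.
apply/negP => L_out.
have := bob_forces_one S1 L_out; rewrite inE; apply/negP/negPn/existsP.
exists (reply (value (fun v => v \notin Zof e root alice s1))).
by rewrite strat2_reply eqxx.
Qed.

Lemma min_zero_set_Zof Z : min_zero_set e root alice Z ->
  exists2 s1, strat1 e alice s1 & Z = Zof e root alice s1.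
Proof.
move=> [/andP[_ L_Z] minZ].
pose s1 := reply (fun v => ~~ value (fun u => u \notin Z) v).
exists s1; first exact: strat1_reply.
have sub_Z : Zof e root alice s1 \subset Z.
  apply/subsetP => v; rewrite inE => /existsP[s2 /andP[S2 /eqP <-]].
  by have := alice_forces_zero S2 L_Z; rewrite negbK.
apply/eqP; rewrite eq_sym eqEproper sub_Z /=.
by apply/negP => /minZ; rewrite Zof_zero_set ?strat1_reply.
Qed.

Definition swap_players : V -> bool := fun v => ~~ alice v.

Lemma xbar_swap k x v :
  xbar e swap_players k (fun u => ~~ x u) v = ~~ xbar e alice k x v.
Proof.
elim: k v => [|k IHk] v //=; case: (leaf e v) => //.
rewrite /swap_players; case: (alice v) => /=.
  by rewrite negb_forall; apply: eq_existsb => w; rewrite negb_imply IHk.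
by rewrite negb_exists; apply: eq_forallb => w; rewrite negb_and -implybE IHk.
Qed.

Lemma strat2_swap s : strat2 e swap_players s = strat1 e alice s.
Proof. by apply: eq_forallb => v; rewrite /swap_players negbK. Qed.

Lemma outcome_swap s1 s2 :
  outcome e root swap_players s1 s2 = outcome e root alice s2 s1.
Proof. by apply: eq_iter => v; rewrite /step /swap_players if_neg. Qed.

Lemma Zof_swap s : Zof e root swap_players s = Aof e root alice s.
Proof.
apply/setP => v; rewrite !inE; apply: eq_existsb => s'.
by rewrite strat2_swap outcome_swap.
Qed.

Lemma zero_set_swap A : zero_set e root swap_players A = one_set e root alice A.
Proof. by rewrite /zero_set /L xbar_swap negbK. Qed.

Lemma min_one_set_swap A :
  min_one_set e root alice A -> min_zero_set e root swap_players A.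
Proof.
case=> oneA minA; split; first by rewrite zero_set_swap.
by move=> B /minA; rewrite zero_set_swap.
Qed.

End Game.

Theorem lemma7 (V : finType) (e : rel V) (root : V) (alice : V -> bool)
  (Hacyc : acyclic e) (Hroot : rooted e root) :
  (* Z(L) ⊂ Z_strat ⊂ Z↑(L) *)
  ((forall Z : {set V}, min_zero_set e root alice Z ->
      exists2 s1, strat1 e alice s1 & Z = Zof e root alice s1) /\
   (forall s1, strat1 e alice s1 -> zero_set e root alice (Zof e root alice s1))) /\
  (* A(L) ⊂ A_strat ⊂ A↑(L) *)
  ((forall A : {set V}, min_one_set e root alice A ->
      exists2 s2, strat2 e alice s2 & A = Aof e root alice s2) /\
   (forall s2, strat2 e alice s2 -> one_set e root alice (Aof e root alice s2))).
Proof.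
split; split.
- by move=> Z; apply: min_zero_set_Zof.
- by move=> s1; apply: Zof_zero_set.
- move=> A /min_one_set_swap/(min_zero_set_Zof Hacyc)[s2 S2 ->].
  by exists s2; rewrite ?Zof_swap.
- move=> s2 S2; rewrite -zero_set_swap -Zof_swap.
  exact: Zof_zero_set.
Qed.
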